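(* The following statements are equivalent: (1) $G^{>}_\nu\neq\emptyset$; (2) there exists $(h,\beta)\in\Gamma(\nu)$ with $\{k:\nu_k>h(0)\}\neq\emptyset$; (3) there exists $(h,\beta)\in\Gamma(\nu)$ such that $\mathfrak F_\nu(\mathbf K^s_\nu,h,\beta)$ is finite, and $\nu_{\rm opt}=\max\{\nu_k:k=0,\dots,\mathbf K^s_\nu\}$; (4) there exist $\theta\in\operatorname{Fin}(X^{\rm in})$ and $\gamma\in\mathcal{KL}_{\rm gen}$ such that $\varphi(T^k(x))\le\gamma(\theta(x),k)$ for all $x\in X^{\rm in}$, $k\in\mathbb N$, and $\inf_{t\ge0}\gamma(\overline\theta,t)<\nu_n$ for some $n\in\mathbb N$; (5) there exists an $(X^{\rm in},T,\varphi)$-compatible Opt-Lyapunov function for $(X^{\rm in},T)$.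
   Context: Standing data: nonempty $X^{\rm in}\subseteq\mathbb R^d$, $T:\mathbb R^d\to\mathbb R^d$, $\varphi:\mathbb R^d\to\mathbb R$ with $\varphi(0)=0$; $\nu_k=\sup_{x\in X^{\rm in}}\varphi(T^k(x))$ finite for all $k$, $\nu_{\rm opt}=\sup_k\nu_k$. $G^{>}_\nu=\{k:\nu_k>\limsup_n\nu_n\}$; $\mathbf K^s_\nu=\inf\{k:\max_{0\le j\le k}\nu_j>\sup_{j>k}\nu_j\}$. $\Gamma(\nu)$: pairs $(h,\beta)$ with $h:\mathbb R\to\mathbb R$ strictly increasing continuous on $[0,1]$, $\beta\in(0,1)$, $\nu_k\le h(\beta^k)$ for all $k$. $\mathfrak F_\nu(k,h,\beta)=\ln(h^{-1}_{[0,1]}(\nu_k))/\ln\beta$ if $(h,\beta)\in\Gamma(\nu)$ and $\nu_k>h(0)$, else $+\infty$. $\overline f=\sup_{X^{\rm in}}f$, $\operatorname{Fin}(X^{\rm in})=\{f:\mathbb R^d\to\mathbb R\cup\{+\infty\}:\overline f<+\infty\}$. $\mathcal{KL}_{\rm gen}$: $\gamma:\mathbb R\times\mathbb R_+\to\mathbb R$ increasing in the first variable and decreasing in the second (not necessarily strictly). Opt-Lyapunov function for $(X^{\rm in},T)$: $V:\mathbb R^d\to[0,+\infty]$ with $\sup_{X^{\rm in}}V\in(0,1]$ and $V\circ T\le\lambda V$ for some $\lambda\in(0,1)$. Such $V$ is $(X^{\rm in},T,\varphi)$-compatible if for some $k\in G^{>}_\nu$ there exist $\varepsilon,\eta>0$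 such that for all $x\in X^{\rm in}$, $j\in\mathbb N$ with $\varphi(T^j(x))>\nu_k-\eta$, $V(T^j(x))>\varepsilon$. *)

From HB Require Import structures.
From mathcomp Require Import all_boot all_order all_algebra.
From mathcomp Require Import all_classical all_reals all_analysis.
Set Implicit Arguments. Unset Strict Implicit. Unset Printing Implicit Defensive.
Import Order.TTheory GRing.Theory Num.Theory.
Import numFieldNormedType.Exports.
Local Open Scope classical_set_scope.
Local Open Scope ring_scope.

Section Defs.
Variables (R : realType) (d : nat).
Notation V := 'rV[R]_d.

Definition nu (X : set V) (T : V -> V) (phi : V -> R) (k : nat) : R :=
  sup [set phi (iter k T x) | x in X].

Definition nu_opt (nu : nat -> R) : \bar R :=
  ereal_sup [set (nu k)%:E | k in [set: nat]].

Definition Ggt (nu : nat -> R) : set nat :=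
  [set k | (limn_esup (fun n => (nu n)%:E) < (nu k)%:E)%E].

Definition maxupto (nu : nat -> R) (k : nat) : R :=
  \big[Num.max/nu 0%N]_(j < k.+1) nu j.

Definition Ks_set (nu : nat -> R) : set nat :=
  [set k | (ereal_sup [set (nu j)%:E | j in [set j | (k < j)%N]] < (maxupto nu k)%:E)%E].

(* K is K^s_nu (K^s_nu finite and equal to K) *)
Definition is_Ks (nu : nat -> R) (K : nat) : Prop :=
  Ks_set nu K /\ forall k, Ks_set nu k -> (K <= k)%N.

Definition Gamma (nu : nat -> R) (h : R -> R) (beta : R) : Prop :=
  (forall s t, 0 <= s -> s < t -> t <= 1 -> h s < h t) /\
  {within `[0, 1], continuous h} /\
  0 < beta < 1 /\
  (forall k, nu k <= h (beta ^+ k)).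

Definition hinv01 (h : R -> R) (y : R) : R :=
  xget 0 [set s | 0 <= s <= 1 /\ h s = y].

Definition frakF (nu : nat -> R) (k : nat) (h : R -> R) (beta : R) : \bar R :=
  if `[< Gamma nu h beta /\ h 0 < nu k >]
  then (ln (hinv01 h (nu k)) / ln beta)%:E
  else +oo%E.

Definition fbar (X : set V) (f : V -> \bar R) : \bar R := ereal_sup (f @` X).

Definition Fin (X : set V) (f : V -> \bar R) : Prop :=
  (forall x, f x != -oo%E) /\ (fbar X f < +oo)%E.

Definition KLgen (gamma : R -> R -> R) : Prop :=
  (forall s s' t, 0 <= t -> s <= s' -> gamma s t <= gamma s' t) /\
  (forall s t t', 0 <= t -> t <= t' -> gamma s t' <= gamma s t).

Definition OptLyap (X : set V) (T : V -> V) (W : V -> \bar R) : Prop :=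
  (forall x, (0 <= W x)%E) /\
  (0 < ereal_sup (W @` X))%E /\ (ereal_sup (W @` X) <= 1)%E /\
  exists lambda : R, 0 < lambda < 1 /\ forall x, (W (T x) <= lambda%:E * W x)%E.

Definition compatible (X : set V) (T : V -> V) (phi : V -> R) (W : V -> \bar R) : Prop :=
  exists k, Ggt (nu X T phi) k /\
  exists eps eta : R, 0 < eps /\ 0 < eta /\
  forall x j, X x -> nu X T phi k - eta < phi (iter j T x) ->
    (eps%:E < W (iter j T x))%E.

End Defs.

From HB Require Import structures.
From mathcomp Require Import all_boot all_order all_algebra.
From mathcomp Require Import all_classical all_reals all_analysis.
From mathcomp Require Import lra.
Set Implicit Arguments. Unset Strict Implicit. Unset Printing Implicit Defensive.
Import Order.TTheory GRing.Theory Num.Theory.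
Import numFieldNormedType.Exports.
Local Open Scope classical_set_scope.
Local Open Scope ring_scope.

(* Condition (1) says that nu eventually stays below some level c < nu_k, and
   each other condition produces or is produced by such a level.  A pair
   (h, beta) in Gamma(nu) gives it because h is continuous at 0 and beta^n -> 0;
   conversely an affine h through (0, c), steep enough to dominate the finitely
   many nu_n above c, lies in Gamma(nu).  A KL_gen bound below nu_n gives the
   level gamma(bar theta, t), and the step function equal to c after time N is
   such a bound.  The function lambda^(first visit time of the orbits of X) is
   Opt-Lyapunov, and is at least lambda^N on {phi > c}, which the orbits only
   visit before time N.  Finally, at the first index K after which the tail of
   nu stays below the running maximum, sup_{j > K} nu_j < nu_K, so K itself
   lies in G^>. *)

Section ValueSequence.
Variable R : realType.
Implicit Types (u : nat -> R) (a c : R).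

Lemma limn_esup_le_eventually u N a : (forall n, (N <= n)%N -> u n <= a) ->
  (limn_esup (fun n => (u n)%:E) <= a%:E)%E.
Proof.
move=> ua; apply: ge_ereal_inf.
exists (ereal_sup ((fun n => (u n)%:E) @` [set n | (N <= n)%N])).
  by exists [set n | (N <= n)%N] => //; exists N.
by apply: ge_ereal_sup => _ [n /= Nn <-]; rewrite lee_fin ua.
Qed.

Lemma limn_esup_lt_eventually u a : (limn_esup (fun n => (u n)%:E) < a%:E)%E ->
  exists N, forall n, (N <= n)%N -> u n < a.
Proof.
move=> /ereal_inf_lt [_ [V [N _ NV] <-]] Va; exists N => n Nn.
rewrite -lte_fin; apply: le_lt_trans Va.
by apply: ereal_sup_ubound; exists n => //; apply: NV.
Qed.

Lemma Ggt_eventually_lt u k : Ggt u k ->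
  exists c N, c < u k /\ forall n, (N <= n)%N -> u n < c.
Proof.
rewrite /Ggt /=; case E: (limn_esup _) => [r| |] //= limk.
- have /limn_esup_lt_eventually [N uN] :
      (limn_esup (fun n => (u n)%:E) < ((r + u k) / 2)%:E)%E.
    by rewrite E lte_fin; rewrite lte_fin in limk; lra.
  by exists ((r + u k) / 2), N; split => //; rewrite lte_fin in limk; lra.
- have /limn_esup_lt_eventually [N uN] :
      (limn_esup (fun n => (u n)%:E) < (u k - 1)%:E)%E by rewrite E ltNyr.
  by exists (u k - 1), N; split => //; lra.
Qed.

Lemma Ggt_eventually_le u k c N :
  c < u k -> (forall n, (N <= n)%N -> u n <= c) -> Ggt u k.
Proof.
by move=> ck /limn_esup_le_eventually uc; apply: le_lt_trans uc _; rewrite lte_fin.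
Qed.

Lemma ub_eventually_lt u c N : (forall n, (N <= n)%N -> u n < c) ->
  exists2 B, c <= B & forall n, u n <= B.
Proof.
move=> uc; exists (\big[Num.max/c]_(n < N) u n); first exact: bigmax_ge_id.
move=> n; case: (ltnP n N) => [nN|Nn].
  exact: (le_bigmax c (fun i : 'I_N => u i) (Ordinal nN)).
exact: le_trans (ltW (uc n Nn)) (bigmax_ge_id _ _ _ _).
Qed.

Lemma expr_eventually_lt (b s : R) : 0 <= b < 1 -> 0 < s ->
  exists N, forall n, (N <= n)%N -> b ^+ n < s.
Proof.
move=> /andP[b0 b1] s0; have : `|b| < 1 by rewrite ger0_norm.
move/cvg_expr/cvgrPdist_lt/(_ s s0) => [N _ bN].
by exists N => n /bN /=; rewrite sub0r normrN; apply: le_lt_trans (ler_norm _).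
Qed.

Lemma continuous_within01_at0 (h : R -> R) (e : R) :
  0 < e -> {within `[0, 1], continuous h} -> exists2 s, 0 < s <= 1 & h s < h 0 + e.
Proof.
move=> e0 /(continuous_within_itvP _ ltr01) [_ /cvgrPdist_lt /(_ e e0) + _].
rewrite near_withinE /= => -[r /= r0 hr].
have m0 : 0 < Num.min (r / 2) 1 by rewrite lt_min ltr01 andbT divr_gt0.
have mr : Num.min (r / 2) 1 < r by rewrite gt_min; apply/orP; left; lra.
exists (Num.min (r / 2) 1); first by rewrite m0 ge_min lexx orbT.
have /hr /(_ m0) : ball_ Num.norm 0 r (Num.min (r / 2) 1).
  by rewrite /ball_ /= sub0r normrN gtr0_norm.
by rewrite ltr_norml => /andP[]; lra.
Qed.

Lemma Ggt_Gamma u k : Ggt u k -> exists h beta, Gamma u h beta /\ h 0 < u k.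
Proof.
move=> /Ggt_eventually_lt [c [N [ck uN]]].
have [B cB uB] := ub_eventually_lt uN.
pose beta : R := 2^-1.
have beta0 : 0 < beta by rewrite invr_gt0.
have beta1 : beta < 1 by rewrite invf_lt1 // ltr1n.
have betaN : 0 < beta ^+ N by rewrite exprn_gt0.
(* the slope makes h (beta ^+ N) = B + 1 *)
pose A := (B - c + 1) / beta ^+ N.
have A0 : 0 < A by rewrite divr_gt0 //; lra.
have hcont : {within `[0, 1], continuous (fun s : R => c + A * s)}.
  apply: continuous_subspaceT => x.
  by apply: cvgD; [exact: cvg_cst|exact: cvgMl_tmp cvg_id].
exists (fun s => c + A * s), beta; split; last by rewrite mulr0 addr0.
split; first by move=> s t _ st _; rewrite ltrD2l ltr_pM2l.
split; first exact: hcont.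
split; first by rewrite beta0 beta1.
move=> n; have Abeta : 0 <= A * beta ^+ n by rewrite mulr_ge0 ?exprn_ge0 ?ltW.
case: (leqP N n) => [/uN|nN]; first lra.
have : A * beta ^+ N <= A * beta ^+ n by rewrite ler_pM2l // ler_wiXn2l // ?ltW // ltnW.
by rewrite divfK ?gt_eqF //; have := uB n; lra.
Qed.

Lemma Gamma_Ggt u h beta k : Gamma u h beta -> h 0 < u k -> Ggt u k.
Proof.
move=> [h_incr [hcont [/andP[beta0 beta1] uh]]] hk.
have e0 : 0 < (u k - h 0) / 2 by lra.
have [s /andP[s0 s1] hs] := continuous_within01_at0 e0 hcont.
have [N betaN] : exists N, forall n, (N <= n)%N -> beta ^+ n < s.
  by apply: expr_eventually_lt; rewrite ?ltW.
apply: (Ggt_eventually_le (c := h s) (N := N)); first lra.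
move=> n /betaN lt_s; apply: le_trans (uh n) _.
by apply/ltW/h_incr => //; rewrite exprn_ge0 // ltW.
Qed.

Lemma frakF_fin_num u K h beta :
  frakF u K h beta \is a fin_num <-> Gamma u h beta /\ h 0 < u K.
Proof. by rewrite /frakF; case: asboolP. Qed.

Lemma le_maxupto u K j : (j <= K)%N -> u j <= maxupto u K.
Proof.
rewrite -ltnS => jK.
exact: (le_bigmax (u 0%N) (fun i : 'I_K.+1 => u i) (Ordinal jK)).
Qed.

Lemma maxupto_attained u K : exists2 j, (j <= K)%N & maxupto u K = u j.
Proof.
apply: (big_ind (fun x => exists2 j, (j <= K)%N & x = u j)); first by exists 0%N.
  move=> _ _ [i iK ->] [j jK ->].
  by case: (leP (u i) (u j)) => _; [exists j|exists i].
by move=> i _; exists i; rewrite // -ltnS.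
Qed.

Definition tailsup u K : \bar R :=
  ereal_sup [set (u j)%:E | j in [set j | (K < j)%N]].

Lemma tailsup_ub u K j : (K < j)%N -> ((u j)%:E <= tailsup u K)%E.
Proof. by move=> Kj; apply: ereal_sup_ubound; exists j. Qed.

Lemma limn_esup_le_tailsup u K : (limn_esup (fun n => (u n)%:E) <= tailsup u K)%E.
Proof.
apply: ge_ereal_inf; exists (tailsup u K) => //.
by exists [set j | (K < j)%N] => //; exists K.+1.
Qed.

Lemma Ks_set_is_Ks u n : Ks_set u n -> exists K, is_Ks u K.
Proof.
move=> Kn; have /ex_minnP[K /asboolP KK Kmin] : exists n, `[< Ks_set u n >].
  by exists n; apply/asboolP.
by exists K; split => // m /asboolP /Kmin.
Qed.

Lemma Ggt_Ks_set u k : Ggt u k -> exists n, Ks_set u n.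
Proof.
move=> /Ggt_eventually_lt [c [N [ck uN]]]; exists (maxn N k).
apply: (@le_lt_trans _ _ c%:E).
  apply: ge_ereal_sup => _ [j /= Nj <-]; rewrite lee_fin ltW // uN //.
  exact: leq_trans (leq_maxl N k) (ltnW Nj).
by rewrite lte_fin (lt_le_trans ck) // le_maxupto // leq_maxr.
Qed.

Lemma is_Ks_tailsup_lt u K : is_Ks u K -> (tailsup u K < (u K)%:E)%E.
Proof.
move=> [KK Kmin]; have [j jK maxj] := maxupto_attained u K.
case: (eqVneq j K) maxj => [-> maxK|jneK maxj]; first by rewrite -maxK; exact: KK.
have jltK : (j < K)%N by rewrite ltn_neqAle jneK.
have eK : K = K.-1.+1 by rewrite prednK // (leq_ltn_trans _ jltK).
(* K.-1 is not in Ks_set, yet its running maximum is already that of K *)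
have maxK : maxupto u K <= maxupto u K.-1 by rewrite maxj le_maxupto // -ltnS -eK.
have tailK : ((maxupto u K.-1)%:E <= tailsup u K.-1)%E.
  by rewrite leNgt; apply/negP => /Kmin; rewrite {1}eK ltnn.
rewrite ltNge; apply/negP => uK.
have tail_pred : (tailsup u K.-1 <= tailsup u K)%E.
  apply: ge_ereal_sup => _ [i /= Ki <-]; move: Ki; rewrite -eK leq_eqVlt.
  by case/orP=> [/eqP <-|]; [|exact: tailsup_ub].
have := lt_le_trans KK (le_trans (lee_tofin maxK) (le_trans tailK tail_pred)).
by rewrite ltxx.
Qed.

Lemma nu_opt_maxupto u K : (tailsup u K < (maxupto u K)%:E)%E ->
  nu_opt u = (maxupto u K)%:E.
Proof.
move=> KK; apply/eqP; rewrite eq_le; apply/andP; split.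
  apply: ge_ereal_sup => _ [j _ <-]; case: (leqP j K) => [jK|Kj].
    by rewrite lee_fin le_maxupto.
  exact: le_trans (tailsup_ub u Kj) (ltW KK).
by have [j _ ->] := maxupto_attained u K; apply: ereal_sup_ubound; exists j.
Qed.

Lemma Ggt_is_Ks u : Ggt u !=set0 ->
  exists K, [/\ is_Ks u K, Ggt u K & nu_opt u = (maxupto u K)%:E].
Proof.
move=> [k /Ggt_Ks_set [n /Ks_set_is_Ks [K isK]]]; exists K; split => //.
  exact: le_lt_trans (limn_esup_le_tailsup u K) (is_Ks_tailsup_lt isK).
by apply: nu_opt_maxupto; case: isK.
Qed.

End ValueSequence.

Section Orbits.
Variables (R : realType) (d : nat) (X : set 'rV[R]_d).
Variables (T : 'rV[R]_d -> 'rV[R]_d) (phi : 'rV[R]_d -> R).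
Hypothesis X0 : X !=set0.
Hypothesis phi_ub : forall k, has_ubound [set phi (iter k T x) | x in X].

Lemma phi_iter_le_nu x k : X x -> phi (iter k T x) <= nu X T phi k.
Proof.
move=> Xx; apply: sup_upper_bound; last by exists x.
by split; [case: X0 => y Xy; exists (phi (iter k T y)), y|exact: phi_ub].
Qed.

Lemma nu_le k a : (forall x, X x -> phi (iter k T x) <= a) -> nu X T phi k <= a.
Proof.
move=> phia; apply: ge_sup; first by case: X0 => y Xy; exists (phi (iter k T y)), y.
by move=> _ [x Xx <-]; exact: phia.
Qed.

Lemma lt_nu_witness c k : c < nu X T phi k -> exists2 x, X x & c < phi (iter k T x).
Proof.
move/sup_gt => /(_ _) [|_ [x Xx <-] cx]; last by exists x.
by case: X0 => y Xy; exists (phi (iter k T y)), y.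
Qed.

Lemma Ggt_KL_bound : Ggt (nu X T phi) !=set0 ->
  exists (theta : 'rV[R]_d -> \bar R) (gamma : R -> R -> R),
    Fin X theta /\ KLgen gamma /\
    (forall x k, X x -> phi (iter k T x) <= gamma (fine (theta x)) k%:R) /\
    exists n, (ereal_inf [set (gamma (fine (fbar X theta)) t)%:E
                         | t in [set t : R | (0 <= t)%R]] < (nu X T phi n)%:E)%E.
Proof.
move=> [k /Ggt_eventually_lt [c [N [ck nuN]]]].
have [B cB nuB] := ub_eventually_lt nuN.
exists (fun=> 0%:E), (fun _ t => if t < N%:R then B else c).
split.
  split=> //; apply: (@le_lt_trans _ _ 0%:E); last by rewrite ltry.
  by apply: ge_ereal_sup => _ [x _ <-].
split.
  split=> // s t t' _ tt'; case: ifP => t'N; case: ifP => tN //.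
  by move: tN; rewrite (le_lt_trans tt' t'N).
split.
  move=> x m Xx; rewrite ltr_nat; case: ltnP => [_|/nuN].
    exact: le_trans (phi_iter_le_nu m Xx) (nuB m).
  by move/(le_lt_trans (phi_iter_le_nu m Xx))/ltW.
exists k; apply: (@le_lt_trans _ _ c%:E); last by rewrite lte_fin.
apply: ge_ereal_inf; exists c%:E => //; exists N%:R => /=; first by rewrite ler0n.
by rewrite ltxx.
Qed.

Lemma KL_bound_Ggt (theta : 'rV[R]_d -> \bar R) (gamma : R -> R -> R) :
  Fin X theta -> KLgen gamma ->
  (forall x k, X x -> phi (iter k T x) <= gamma (fine (theta x)) k%:R) ->
  (exists n, (ereal_inf [set (gamma (fine (fbar X theta)) t)%:E
                        | t in [set t : R | (0 <= t)%R]] < (nu X T phi n)%:E)%E) ->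
  Ggt (nu X T phi) !=set0.
Proof.
move=> [thetaNy thetab] [gamma_incr gamma_decr] phi_gamma [n].
have le_bar x : X x -> (theta x <= fbar X theta)%E.
  by move=> Xx; apply: ereal_sup_ubound; exists x.
have theta_fin x : X x -> theta x \is a fin_num.
  move=> Xx; rewrite fin_numE thetaNy /=.
  by rewrite lt_eqF // (le_lt_trans (le_bar x Xx)).
have bar_fin : fbar X theta \is a fin_num.
  case: X0 => x Xx; rewrite fin_numE (lt_eqF thetab) andbT.
  apply: contraTneq (le_bar x Xx) => ->; rewrite leeNy_eq.
  by have := theta_fin x Xx; rewrite fin_numE => /andP[].
move/ereal_inf_lt => [_ [t /= t0 <-]]; rewrite lte_fin => gamma_lt.
exists n; apply: (Ggt_eventually_le (N := (Num.truncn t).+1) gamma_lt) => m tm.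
apply: nu_le => x Xx; apply: le_trans (phi_gamma x m Xx) _.
apply: le_trans (gamma_incr _ _ _ (ler0n _ m) _) _.
  exact: fine_le (theta_fin x Xx) bar_fin (le_bar x Xx).
apply: gamma_decr => //; apply/ltW/(lt_le_trans (truncnS_gt t)).
by rewrite ler_nat.
Qed.

(* [lam ^+ m] for the first time m at which an orbit from X visits y, and
   [+oo] off the forward orbits of X *)
Definition visit_potential (lam : R) (y : 'rV[R]_d) : \bar R :=
  ereal_inf [set (lam ^+ m)%:E | m in [set m | exists2 x, X x & iter m T x = y]].

Lemma visit_potential_ge0 lam y : 0 <= lam -> (0 <= visit_potential lam y)%E.
Proof.
by move=> lam0; apply: le_ereal_inf_tmp => _ [m _ <-]; rewrite lee_fin exprn_ge0.
Qed.

Lemma visit_potential_le1 lam x : X x -> (visit_potential lam x <= 1)%E.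
Proof. by move=> Xx; apply: ereal_inf_lbound; exists 0%N => //; exists x. Qed.

Lemma visit_potential_iter lam y : 0 < lam ->
  (visit_potential lam (T y) <= lam%:E * visit_potential lam y)%E.
Proof.
move=> lam0; rewrite /visit_potential -ereal_inf_pZl //.
apply: le_ereal_inf_tmp => _ [_ [m [x Xx <-] <-] <-].
by apply: ereal_inf_lbound; exists m.+1; [exists x|rewrite exprS EFinM].
Qed.

Lemma visit_potential_ge lam N y : 0 <= lam <= 1 ->
  (forall m x, X x -> iter m T x = y -> (m < N)%N) ->
  ((lam ^+ N)%:E <= visit_potential lam y)%E.
Proof.
move=> /andP[lam0 lam1] early; apply: le_ereal_inf_tmp => _ [m [x Xx xm] <-].
by rewrite lee_fin ler_wiXn2l // ltnW // (early m x).
Qed.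

Lemma Ggt_OptLyap : Ggt (nu X T phi) !=set0 ->
  exists W : 'rV[R]_d -> \bar R, OptLyap X T W /\ compatible X T phi W.
Proof.
move=> [k Gk]; have [c [N [ck nuN]]] := Ggt_eventually_lt Gk.
have early x m : X x -> c < phi (iter m T x) -> (m < N)%N.
  move=> Xx cx; rewrite ltnNge; apply/negP => /nuN.
  by move/(le_lt_trans (phi_iter_le_nu m Xx))/(lt_trans cx); rewrite ltxx.
have early_above y : c < phi y -> forall m x, X x -> iter m T x = y -> (m < N)%N.
  by move=> cy m x Xx xy; apply: (early x) => //; rewrite xy.
pose lam : R := 2^-1.
have lam0 : 0 < lam by rewrite invr_gt0.
have lam1 : lam < 1 by rewrite invf_lt1 // ltr1n.
have lamN : 0 < lam ^+ N by rewrite exprn_gt0.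
have lam01 : 0 <= lam <= 1 by rewrite !ltW.
have [x0 Xx0 cx0] := lt_nu_witness ck.
have W_x0 : ((lam ^+ N)%:E <= visit_potential lam x0)%E.
  apply: visit_potential_ge => // m x Xx xm.
  by apply: leq_ltn_trans (leq_addl k m) _; apply: (early x) => //; rewrite iterD xm.
exists (visit_potential lam); split.
  split; first by move=> y; exact: visit_potential_ge0 (ltW lam0).
  split.
    apply: (@lt_le_trans _ _ (lam ^+ N)%:E); first by rewrite lte_fin.
    by apply: le_trans W_x0 _; apply: ereal_sup_ubound; exists x0.
  split; first by apply: ge_ereal_sup => _ [x Xx <-]; exact: visit_potential_le1.
  by exists lam; split; [rewrite lam0 lam1|move=> y; exact: visit_potential_iter].
exists k; split => //; exists (lam ^+ N.+1), (nu X T phi k - c).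
split; first exact: exprn_gt0.
split; first by rewrite subr_gt0.
move=> x j Xx; rewrite opprB addrCA subrr addr0 => cj.
apply: lt_le_trans (visit_potential_ge lam01 (early_above _ cj)).
by rewrite lte_fin exprS; nra.
Qed.

End Orbits.

Theorem mainTheorem20 (R : realType) (d : nat) (X : set 'rV[R]_d)
  (T : 'rV[R]_d -> 'rV[R]_d) (phi : 'rV[R]_d -> R) :
  X !=set0 ->
  phi 0 = 0 ->
  (forall k, has_ubound [set phi (iter k T x) | x in X]) ->
  let nu := nu X T phi in
  [<-> Ggt nu !=set0;
       exists h beta, Gamma nu h beta /\ [set k | h 0 < nu k] !=set0;
       exists K, is_Ks nu K /\
         (exists h beta, Gamma nu h beta /\ frakF nu K h beta \is a fin_num) /\
         nu_opt nu = (maxupto nu K)%:E;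
       exists (theta : 'rV[R]_d -> \bar R) (gamma : R -> R -> R),
         Fin X theta /\ KLgen gamma /\
         (forall x k, X x -> phi (iter k T x) <= gamma (fine (theta x)) k%:R) /\
         exists n, (ereal_inf [set (gamma (fine (fbar X theta)) t)%:E | t in [set t : R | (0 <= t)%R]] < (nu n)%:E)%E;
       exists W : 'rV[R]_d -> \bar R, OptLyap X T W /\ compatible X T phi W].
Proof.
move=> X0 _ phi_ub nu; tfae.
- move=> [k /Ggt_Gamma [h [beta [Gam hk]]]].
  by exists h, beta; split => //; exists k.
- move=> [h [beta [Gam [k hk]]]].
  have [K [isK GK opt]] := Ggt_is_Ks (ex_intro _ k (Gamma_Ggt Gam hk)).
  have [h' [beta' GK']] := Ggt_Gamma GK.
  exists K; split => //; split => //; exists h', beta'.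
  by split; [case: GK'|exact/frakF_fin_num].
- move=> [K [_ [[h [beta [_ /frakF_fin_num [Gam hK]]]] _]]].
  by apply: Ggt_KL_bound => //; exists K; exact: Gamma_Ggt Gam hK.
- move=> [theta [gamma [Fth [KLg [bound lt_nu]]]]].
  exact/Ggt_OptLyap/(KL_bound_Ggt X0 Fth KLg bound lt_nu).
- by move=> [W [_ [k [Gk _]]]]; exists k.
Qed.
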